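(* Let $T\in\mathcal C(\rho)$ and define $K_T\colon G\times Y\times G\times Y\to\mathbb C$ by $K_T(x,y,u,v)=(TK_{u,v})(x,y)$. Then for every $f\in H$ and $(x,y)\in G\times Y$, \[ (Tf)(x,y)=\int_{G\times Y}K_T(x,y,u,v)\,f(u,v)\,d\nu(u)\,d\lambda(v). \] Moreover, $K_T(x,y,u,v)=K_T(x-u,y,0,v)$ for all $u,x\in G$, $v,y\in Y$, and $K_T(\cdot,\cdot,0,v)\in H$ for every $v\in Y$ and $\overline{K_T(0,y,\cdot,\cdot)}\in H$ for every $y\in Y$.
   Context: Let $G$ be a locally compact abelian group (written additively) with Haar measure $\nu$, and $(Y,\lambda)$ a measure space. Let $H$ be a reproducing kernel Hilbert space of complex functions on $G\times Y$ whose inner product is that of $L^2(G\times Y,\nu\otimes\lambda)$, with reproducing kernel $(K_{x,y})_{(x,y)\in G\times Y}$ (so $f(x,y)=\langle f,K_{x,y}\rangle$ for $f\in H$). Assume $K_{x,y}(u,v)=K_{0,y}(u-x,v)$ for all $u,x\in G$, $v,y\in Y$. For $a\in G$ let $\rho(a)$ be the unitary operator on $H$ given by $(\rho(a)f)(x,y)=f(x-a,y)$, and $\mathcal C(\rho)=\{S\in\mathcal B(H): S\rho(a)=\rho(a)S\ \forall a\in G\}$. *)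

From HB Require Import structures.
From mathcomp Require Import all_boot all_order all_algebra.
From mathcomp Require Import all_classical all_reals all_analysis.
From mathcomp Require Import complex.

Set Implicit Arguments.
Unset Strict Implicit.
Unset Printing Implicit Defensive.

Import Order.TTheory GRing.Theory Num.Theory.
Local Open Scope classical_set_scope.
Local Open Scope ring_scope.

Definition ptype (G : topologicalZmodType) : Type := G.
HB.instance Definition _ (G : topologicalZmodType) := Choice.on (ptype G).
HB.instance Definition _ (G : topologicalZmodType) := isPointed.Build (ptype G) 0.
Notation Borel G := (g_sigma_algebraType (@open G : set (set (ptype G)))).

Section Defs.
Variable R : realType.

Definition LCA_group (G : topologicalZmodType) : Prop :=
  hausdorff_space G /\ locally_compact [set: G].

Definition haar_measure (G : topologicalZmodType)
    (nu : {measure set Borel G -> \bar R}) : Prop :=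
  [/\ (forall (a : G) (A : set (Borel G)), measurable A ->
         nu [set a + x | x in (A : set G)] = nu A),
      (forall K : set (Borel G), compact (K : set G) -> (nu K < +oo)%E),
      (forall U : set (Borel G), open (U : set G) -> U !=set0 -> (0 < nu U)%E),
      (forall A : set (Borel G), measurable A ->
         nu A = ereal_inf [set nu U | U in [set U : set (Borel G) | open (U : set G) /\ A `<=` U]]) &
      (forall U : set (Borel G), open (U : set G) ->
         nu U = ereal_sup [set nu K | K in [set K : set (Borel G) | compact (K : set G) /\ K `<=` U]])].

Definition is_product_measure {d d'} {G : measurableType d} {Y : measurableType d'}
    (nu : {measure set G -> \bar R}) (lam : {measure set Y -> \bar R})
    (m : {measure set (G * Y) -> \bar R}) : Prop :=
  forall (A : set G) (B : set Y), measurable A -> measurable B ->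
    m (A `*` B) = (nu A * lam B)%E.

Context {dT : measure_display} {T : measurableType dT}.
Variable m : {measure set T -> \bar R}.

Definition cmeasurable (h : T -> R[i]) : Prop :=
  measurable_fun [set: T] (fun p => complex.Re (h p)) /\
  measurable_fun [set: T] (fun p => complex.Im (h p)).

Definition cintegrable (h : T -> R[i]) : Prop :=
  m.-integrable [set: T] (fun p => (complex.Re (h p))%:E) /\
  m.-integrable [set: T] (fun p => (complex.Im (h p))%:E).

Definition cintegral (h : T -> R[i]) : R[i] :=
  Complex (Rintegral m [set: T] (fun p => complex.Re (h p)))
          (Rintegral m [set: T] (fun p => complex.Im (h p))).

Definition L2 (f : T -> R[i]) : Prop :=
  cmeasurable f /\
  m.-integrable [set: T] (fun p => ((complex.Re (f p)) ^+ 2 + (complex.Im (f p)) ^+ 2)%:E).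

Definition L2_inner (f g : T -> R[i]) : R[i] :=
  cintegral (fun p => f p * conjc (g p)).

Definition L2_norm2 (f : T -> R[i]) : R := complex.Re (L2_inner f f).

Definition L2_hilbert_subspace (H : set (T -> R[i])) : Prop :=
  [/\ H `<=` L2,
      H (fun=> 0),
      (forall f g, H f -> H g -> H (f \+ g)),
      (forall (c : R[i]) f, H f -> H (fun p => c * f p)) &
      (forall u : nat -> T -> R[i], (forall n, H (u n)) ->
         (forall e : R, 0 < e -> exists N, forall n k, (N <= n)%N -> (N <= k)%N ->
            L2_norm2 (u n \- u k) < e) ->
         exists2 g, H g & forall e : R, 0 < e -> exists N, forall n, (N <= n)%N ->
            L2_norm2 (u n \- g) < e)].

(* S is a bounded linear operator on H, i.e. S is in B(H)
   (only its values on H are relevant). *)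
Definition bounded_operator (H : set (T -> R[i])) (S : (T -> R[i]) -> (T -> R[i])) : Prop :=
  [/\ (forall f, H f -> H (S f)),
      (forall f g, H f -> H g -> S (f \+ g) = S f \+ S g),
      (forall (c : R[i]) f, H f -> S (fun p => c * f p) = (fun p => c * S f p)) &
      (exists M : R, forall f, H f -> L2_norm2 (S f) <= M * L2_norm2 f)].

End Defs.

Section Setting.
Variable R : realType.
Context {d' : measure_display} {G : topologicalZmodType} {Y : measurableType d'}.

Definition rho (a : G) (f : Borel G * Y -> R[i]) : Borel G * Y -> R[i] :=
  fun p => f ((p.1 : G) - a, p.2).

Definition reproducing_kernel (m : {measure set (Borel G * Y) -> \bar R})
    (H : set (Borel G * Y -> R[i])) (K : G -> Y -> Borel G * Y -> R[i]) : Prop :=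
  forall x y, H (K x y) /\ forall f, H f -> f (x, y) = L2_inner m f (K x y).

Definition commutant (m : {measure set (Borel G * Y) -> \bar R})
    (H : set (Borel G * Y -> R[i])) (S : (Borel G * Y -> R[i]) -> (Borel G * Y -> R[i])) : Prop :=
  bounded_operator m H S /\
  forall (a : G) f, H f -> S (rho a f) = rho a (S f).

End Setting.

From HB Require Import structures.
From mathcomp Require Import all_boot all_order all_algebra.
From mathcomp Require Import all_classical all_reals all_analysis measurable_realfun.
From mathcomp Require Import complex ring lra.

(* For fixed (x, y), f |-> (T f)(x, y) = <T f, K_{x,y}> is a bounded linear
   functional on H by Cauchy-Schwarz, so the Riesz representation theorem gives
   g in H with (T f)(x, y) = <f, g>.  By the reproducing property
   K_T(x, y, u, v) = <K_{u,v}, g> = conj (g (u, v)), which yields the integral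
   formula and the membership of conj K_T(0, y, ., .) in H; K_T(., ., 0, v) is
   T K_{0,v}, and translation invariance comes from K_{u,v} = rho(u) K_{0,v} and
   T rho(u) = rho(u) T.
   The Riesz representation uses only completeness: the squared norm attains
   its infimum on the affine hyperplane {phi = 1}, since a minimizing sequence
   is Cauchy by the parallelogram law, and the minimizer is orthogonal to
   ker phi. *)

Set Implicit Arguments.
Unset Strict Implicit.
Unset Printing Implicit Defensive.

Import Order.TTheory GRing.Theory Num.Theory numFieldNormedType.Exports.
Local Open Scope classical_set_scope.
Local Open Scope ring_scope.
Local Open Scope complex_scope.

Lemma quadratic_ge0_discr (F : realFieldType) (a b c : F) : 0 <= b ->
  (forall t, 0 <= a + 2 * c * t + b * t ^+ 2) -> c ^+ 2 <= a * b.
Proof.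
move=> b_ge0 quad_ge0; have [b_gt0|] := ltP 0 b.
  have := quad_ge0 (- c / b).
  have -> : a + 2 * c * (- c / b) + b * (- c / b) ^+ 2 = a - c ^+ 2 / b.
    by field; rewrite gt_eqF.
  by rewrite subr_ge0 ler_pdivrMr.
move=> b_le0; have b0 : b = 0 by apply/eqP; rewrite eq_le b_le0 b_ge0.
rewrite b0 in quad_ge0 *.
have [->|c_neq0] := eqVneq c 0; first by rewrite expr0n mulr0.
have := quad_ge0 (- (a + 1) / (2 * c)).
have -> : a + 2 * c * (- (a + 1) / (2 * c)) + 0 * (- (a + 1) / (2 * c)) ^+ 2 = -1.
  by field.
by rewrite oppr_ge0 ler10.
Qed.

Lemma cvg_nat0P (R : realType) (s : nat -> R) : (forall n, 0 <= s n) ->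
  s @ \oo --> 0 <-> forall e, 0 < e -> exists N, forall n, (N <= n)%N -> s n < e.
Proof.
move=> s_ge0; rewrite cvgrPdist_lt; split=> s_small e /s_small.
  by move=> [N _ sN]; exists N => n /sN; rewrite sub0r normrN ger0_norm.
by move=> [N sN]; exists N => // n /sN; rewrite /= sub0r normrN ger0_norm.
Qed.

Section SquaredModulus.
Variable R : rcfType.

Definition sqrnormc (z : R[i]) : R := complex.Re z ^+ 2 + complex.Im z ^+ 2.

Lemma sqrnormc_ge0 z : 0 <= sqrnormc z.
Proof. by rewrite addr_ge0 ?sqr_ge0. Qed.

Lemma sqrnormc_eq0 z : (sqrnormc z == 0) = (z == 0).
Proof.
case: z => a b; rewrite /sqrnormc paddr_eq0 ?sqr_ge0 // !sqrf_eq0.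
by rewrite eq_complex.
Qed.

Lemma sqrnormc_real (t : R) (z : R[i]) : sqrnormc (t%:C * z) = t ^+ 2 * sqrnormc z.
Proof. by case: z => a b; rewrite /sqrnormc /=; ring. Qed.

Lemma Re_mul_conj (a b : R[i]) :
  complex.Re (a * conjc b) = complex.Re a * complex.Re b + complex.Im a * complex.Im b.
Proof. by case: a b => [x y] [u v] /=; ring. Qed.

Lemma Im_mul_conj (a b : R[i]) :
  complex.Im (a * conjc b) = complex.Im a * complex.Re b - complex.Re a * complex.Im b.
Proof. by case: a b => [x y] [u v] /=; ring. Qed.

Lemma mul_conj_parts_le (a b : R[i]) :
  `|complex.Re (a * conjc b)| <= sqrnormc a + sqrnormc b /\
  `|complex.Im (a * conjc b)| <= sqrnormc a + sqrnormc b.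
Proof.
rewrite Re_mul_conj Im_mul_conj /sqrnormc.
case: a b => [x y] [u v] /=.
have := sqr_ge0 (x - u); have := sqr_ge0 (x + u); have := sqr_ge0 (y - v).
have := sqr_ge0 (y + v); have := sqr_ge0 (y - u); have := sqr_ge0 (y + u).
have := sqr_ge0 (x - v); have := sqr_ge0 (x + v).
by split; rewrite ler_norml; apply/andP; split; nra.
Qed.

End SquaredModulus.

Section InnerProduct.
Variables (R : realType) (V : lmodType R[i]) (H : set V) (ip : V -> V -> R[i]).
Hypothesis H_add : forall f g, H f -> H g -> H (f + g).
Hypothesis H_scale : forall c f, H f -> H (c *: f).
Hypothesis ipDl : forall f g h, H f -> H g -> H h -> ip (f + g) h = ip f h + ip g h.
Hypothesis ipZl : forall c f h, H f -> H h -> ip (c *: f) h = c * ip f h.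
Hypothesis ip_conj : forall f g, H f -> H g -> ip g f = conjc (ip f g).
Hypothesis ip_ge0 : forall f, H f -> 0 <= complex.Re (ip f f).

Local Notation nrm2 f := (complex.Re (ip f f)).

Lemma H_sub f g : H f -> H g -> H (f - g).
Proof. by move=> Hf Hg; rewrite -scaleN1r; apply/H_add/H_scale. Qed.

Lemma ipDr f g h : H f -> H g -> H h -> ip h (f + g) = ip h f + ip h g.
Proof.
move=> Hf Hg Hh.
by rewrite (ip_conj (H_add Hf Hg) Hh) (ip_conj Hf Hh) (ip_conj Hg Hh) ipDl // rmorphD.
Qed.

Lemma ipZr c f h : H f -> H h -> ip h (c *: f) = conjc c * ip h f.
Proof.
by move=> Hf Hh; rewrite (ip_conj (H_scale c Hf) Hh) (ip_conj Hf Hh) ipZl // rmorphM.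
Qed.

Lemma ip_self f : H f -> ip f f = (nrm2 f)%:C.
Proof.
move=> Hf; have := ip_conj Hf Hf; case: (ip f f) => a b [b_eq].
by congr (_ +i* _); lra.
Qed.

Lemma nrm2D_scale f g c : H f -> H g ->
  nrm2 (f + c *: g) = nrm2 f + sqrnormc c * nrm2 g + 2 * complex.Re (conjc c * ip f g).
Proof.
move=> Hf Hg; have Hcg := H_scale c Hg; have Hfcg := H_add Hf Hcg.
rewrite ipDl // !ipDr // !ipZl // !ipZr // (ip_conj Hf Hg).
rewrite (ip_self Hf) (ip_self Hg) /sqrnormc.
by case: (ip f g) => a b; case: (c) => x y /=; ring.
Qed.

Lemma nrm2Z c f : H f -> nrm2 (c *: f) = sqrnormc c * nrm2 f.
Proof.
move=> Hf; have Hcf := H_scale c Hf.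
rewrite ipZl // ipZr // (ip_self Hf) /sqrnormc.
by case: (c) => x y /=; ring.
Qed.

Lemma parallelogram f g : H f -> H g ->
  nrm2 (f + g) + nrm2 (f - g) = 2 * nrm2 f + 2 * nrm2 g.
Proof.
move=> Hf Hg; rewrite -[in f + g](scale1r g) -scaleN1r !nrm2D_scale // /sqrnormc.
by case: (ip f g) => a b /=; ring.
Qed.

Lemma nrm2D_scale_ip f g (t : R) : H f -> H g ->
  nrm2 (f + (t%:C * ip f g) *: g) =
  nrm2 f + 2 * sqrnormc (ip f g) * t + sqrnormc (ip f g) * nrm2 g * t ^+ 2.
Proof.
move=> Hf Hg; rewrite nrm2D_scale // sqrnormc_real /sqrnormc.
by case: (ip f g) => a b /=; ring.
Qed.

Lemma cauchy_schwarz f g : H f -> H g -> sqrnormc (ip f g) <= nrm2 f * nrm2 g.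
Proof.
move=> Hf Hg; have q_ge0 := sqrnormc_ge0 (ip f g).
have discr : sqrnormc (ip f g) ^+ 2 <= nrm2 f * (sqrnormc (ip f g) * nrm2 g).
  apply: quadratic_ge0_discr; first by rewrite mulr_ge0 ?ip_ge0.
  by move=> t; rewrite -nrm2D_scale_ip //; apply/ip_ge0/H_add/H_scale.
have [q_gt0|q_le0] := ltP 0 (sqrnormc (ip f g)).
  by rewrite -(ler_pM2l q_gt0) -expr2 mulrCA.
by rewrite (le_trans q_le0) ?mulr_ge0 ?ip_ge0.
Qed.

Lemma ip_eq0_of_minimal f k : H f -> H k ->
  (forall c, nrm2 f <= nrm2 (f + c *: k)) -> ip f k = 0.
Proof.
move=> Hf Hk f_min; apply/eqP; rewrite -sqrnormc_eq0 -sqrf_eq0.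
rewrite eq_le sqr_ge0 andbT -(mul0r (sqrnormc (ip f k) * nrm2 k)).
apply: quadratic_ge0_discr; first by rewrite mulr_ge0 ?sqrnormc_ge0 ?ip_ge0.
move=> t; have := f_min (t%:C * ip f k); rewrite nrm2D_scale_ip //; lra.
Qed.

Section Riesz.
Hypothesis H0 : H 0.
Variables (phi : V -> R[i]) (M : R).
Hypothesis phiD : forall f g, H f -> H g -> phi (f + g) = phi f + phi g.
Hypothesis phiZ : forall c f, H f -> phi (c *: f) = c * phi f.
Hypothesis phi_bounded : forall f, H f -> sqrnormc (phi f) <= M * nrm2 f.
Hypothesis H_complete : forall u : nat -> V, (forall n, H (u n)) ->
  (forall e : R, 0 < e -> exists N, forall n k, (N <= n)%N -> (N <= k)%N ->
     nrm2 (u n - u k) < e) ->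
  exists2 g, H g & forall e : R, 0 < e -> exists N, forall n, (N <= n)%N ->
     nrm2 (u n - g) < e.

Let A h := H h /\ phi h = 1.
Let d := inf [set nrm2 h | h in A].

Lemma phiB f g : H f -> H g -> phi (f - g) = phi f - phi g.
Proof.
move=> Hf Hg; have Hg' := H_scale (-1) Hg.
by rewrite -[in LHS]scaleN1r phiD // phiZ // mulN1r.
Qed.

Lemma inf_le h : A h -> d <= nrm2 h.
Proof.
move=> Ah; apply: ge_inf; last by exists h.
by exists 0 => _ [g [Hg _] <-]; exact: ip_ge0.
Qed.

Lemma midpoint_mem u v : A u -> A v -> A (2^-1 *: (u + v)).
Proof.
move=> [Hu phiu] [Hv phiv]; have Huv := H_add Hu Hv; split; first exact: H_scale.
by rewrite phiZ // phiD // phiu phiv mulVf // pnatr_eq0.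
Qed.

Lemma nrm2B_le_excess u v : A u -> A v ->
  nrm2 (u - v) <= 2 * (nrm2 u - d) + 2 * (nrm2 v - d).
Proof.
(* The parallelogram law, with the midpoint of u and v in A. *)
move=> Au Av; have := inf_le (midpoint_mem Au Av).
have [[Hu _] [Hv _]] := (Au, Av); have Huv := H_add Hu Hv.
rewrite nrm2Z //; have := parallelogram Hu Hv.
have -> : sqrnormc (2^-1 : R[i]) = 4^-1.
  by rewrite /sqrnormc /=; field.
lra.
Qed.

Lemma limit_mem u h0 : (forall n, A (u n)) -> H h0 ->
  nrm2 (u n - h0) @[n --> \oo] --> 0 -> A h0.
Proof.
move=> Au Hh0 dist0; split=> //.
have bound n : sqrnormc (1 - phi h0) <= M * nrm2 (u n - h0).
  have [Hun <-] := Au n; rewrite -phiB //; exact/phi_bounded/H_sub.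
have : sqrnormc (1 - phi h0) <= M * 0.
  by apply: (cvgr_to_ge (cvgM (cvg_cst M) dist0)); exact: nearW.
rewrite mulr0 => le0; apply/eqP; rewrite eq_sym -subr_eq0 -sqrnormc_eq0.
by rewrite eq_le le0 sqrnormc_ge0.
Qed.

Lemma limit_le_inf u h0 : (forall n, A (u n)) -> A h0 ->
  nrm2 (u n) - d @[n --> \oo] --> 0 -> nrm2 (u n - h0) @[n --> \oo] --> 0 ->
  nrm2 h0 <= d.
Proof.
move=> Au [Hh0 phih0] excess0 dist0.
have bound n : nrm2 h0 <= d + (2 * (nrm2 (u n) - d) + 2 * nrm2 (u n - h0)).
  (* u n + (u n - h0) is in A, and h0 = u n - (u n - h0). *)
  have [Hun phiun] := Au n; have Hdist := H_sub Hun Hh0.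
  have /inf_le : A (u n + (u n - h0)).
    split; first exact: H_add.
    by rewrite phiD // phiB // phiun phih0 subrr addr0.
  by have := parallelogram Hun Hdist; rewrite subKr; lra.
suff : nrm2 h0 <= d + (2 * 0 + 2 * 0) by rewrite mulr0 !addr0.
apply: (cvgr_to_ge (cvgD (cvg_cst d)
  (cvgD (cvgM (cvg_cst (2 : R)) excess0) (cvgM (cvg_cst (2 : R)) dist0)))).
exact: nearW.
Qed.

Lemma exists_minimizer : A !=set0 ->
  exists2 h0, A h0 & forall h, A h -> nrm2 h0 <= nrm2 h.
Proof.
move=> [h1 Ah1].
have d_inf : has_inf [set nrm2 h | h in A].
  by split; [exists (nrm2 h1), h1 | exists 0 => _ [h [Hh _] <-]; exact: ip_ge0].
have /choice [u uP] : forall n, exists h, A h /\ nrm2 h < d + n.+1%:R^-1.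
  move=> n; have n_gt0 : 0 < n.+1%:R^-1 :> R by rewrite invr_gt0.
  by have [_ [h Ah <-] lt_h] := inf_adherent n_gt0 d_inf; exists h.
have Au n : A (u n) := (uP n).1.
have excess_ge0 n : 0 <= nrm2 (u n) - d by rewrite subr_ge0 inf_le.
have excess0 : nrm2 (u n) - d @[n --> \oo] --> 0.
  apply: (squeeze_cvgr _ (cvg_cst 0) cvg_harmonic); apply: nearW => n.
  by rewrite excess_ge0 /= lerBlDl ltW //; case: (uP n).
have cauchy : forall e, 0 < e -> exists N, forall n k, (N <= n)%N -> (N <= k)%N ->
    nrm2 (u n - u k) < e.
  move=> e e_gt0; have [N small] := (cvg_nat0P excess_ge0).1 excess0 (e / 4)
    (divr_gt0 e_gt0 (ltr0Sn _ 3)).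
  exists N => n k /small small_n /small small_k.
  by apply: le_lt_trans (nrm2B_le_excess (Au n) (Au k)) _; lra.
have [h0 Hh0 dist_small] := H_complete (fun n => (Au n).1) cauchy.
have dist_ge0 n : 0 <= nrm2 (u n - h0) := ip_ge0 (H_sub (Au n).1 Hh0).
have dist0 := (cvg_nat0P dist_ge0).2 dist_small.
have Ah0 := limit_mem Au Hh0 dist0.
by exists h0 => // h /inf_le; apply: le_trans (limit_le_inf Au Ah0 excess0 dist0).
Qed.

Lemma representation_of_minimizer h0 : A h0 ->
  (forall h, A h -> nrm2 h0 <= nrm2 h) ->
  forall f, H f -> phi f = ip f ((nrm2 h0)^-1%:C *: h0).
Proof.
move=> [Hh0 phih0] h0_min.
have orth k : H k -> phi k = 0 -> ip h0 k = 0.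
  move=> Hk phik; apply: ip_eq0_of_minimal => // c.
  have Hck := H_scale c Hk; apply: h0_min; split; first exact: H_add.
  by rewrite phiD // phiZ // phik mulr0 addr0.
have nrm2_neq0 : nrm2 h0 != 0.
  apply: contraTneq (phi_bounded Hh0) => ->.
  by rewrite phih0 mulr0 /sqrnormc /= -ltNge; lra.
move=> f Hf; have Hcf := H_scale (- phi f) Hh0.
(* f - phi f *: h0 is in ker phi. *)
have := orth _ (H_add Hf Hcf).
rewrite phiD // phiZ // phih0 mulr1 subrr => /(_ erefl).
rewrite ipDr // ipZr // ipZr // (ip_self Hh0) (ip_conj Hh0 Hf).
move: nrm2_neq0; case: (ip h0 f) (phi f) (nrm2 h0) => a b [x y] r r_neq0 /= [ha hb].
have [-> ->] : a = x * r /\ b = - y * r by split; lra.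
by congr (_ +i* _); field.
Qed.

Lemma riesz_representation : exists2 g, H g & forall f, H f -> phi f = ip f g.
Proof.
have [[f1 [Hf1 phif1]]|phi0] := pselect (exists f, H f /\ phi f != 0).
  have [|h0 Ah0 h0_min] := exists_minimizer.
    exists ((phi f1)^-1 *: f1); split; first exact: H_scale.
    by rewrite phiZ // mulVf.
  exists ((nrm2 h0)^-1%:C *: h0); first exact: H_scale Ah0.1.
  exact: representation_of_minimizer.
exists 0 => // f Hf; rewrite -(scale0r (0 : V)) ipZr // rmorph0 mul0r.
by apply: contra_notP phi0 => phif; exists f; split=> //; exact/eqP.
Qed.

End Riesz.
End InnerProduct.

Section ComplexIntegral.
Variables (R : realType) (dT : measure_display) (T : measurableType dT).
Variable m : {measure set T -> \bar R}.
Implicit Types f g h k : T -> R[i].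

Lemma integrableZ_EFin (a : R) (s : T -> R) : m.-integrable setT (EFin \o s) ->
  m.-integrable setT (EFin \o (fun p => a * s p)).
Proof.
move=> si; apply: (eq_integrable measurableT _ _ _ (integrableZl measurableT a si)).
by move=> p _; rewrite /= EFinM.
Qed.

Lemma cintegralD h k : cintegrable m h -> cintegrable m k ->
  cintegral m (fun p => h p + k p) = cintegral m h + cintegral m k.
Proof.
move=> [hRe hIm] [kRe kIm]; rewrite /cintegral /=.
by congr (_ +i* _); rewrite -(RintegralD measurableT) //;
  apply: eq_Rintegral => p _; case: (h p) (k p) => [? ?] [? ?].
Qed.

Lemma cintegralZ c h : cintegrable m h ->
  cintegral m (fun p => c * h p) = c * cintegral m h.
Proof.
move=> [hRe hIm]; rewrite /cintegral; case: c => a b /=.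
have [iaRe ibIm] := (integrableZ_EFin a hRe, integrableZ_EFin b hIm).
have [iaIm ibRe] := (integrableZ_EFin a hIm, integrableZ_EFin b hRe).
congr (_ +i* _).
- rewrite -!(RintegralZl _ measurableT) // -(RintegralB measurableT) //.
  by apply: eq_Rintegral => p _; case: (h p).
- rewrite -!(RintegralZl _ measurableT) // -(RintegralD measurableT) //.
  by apply: eq_Rintegral => p _; case: (h p) => ? ? /=; ring.
Qed.

Lemma cintegral_conj h : cintegrable m h ->
  cintegral m (fun p => conjc (h p)) = conjc (cintegral m h).
Proof.
move=> [_ hIm]; rewrite /cintegral /=; congr (_ +i* _).
  by apply: eq_Rintegral => p _; case: (h p).
rewrite -mulN1r -(RintegralZl _ measurableT) //.
by apply: eq_Rintegral => p _; case: (h p) => ? ? /=; rewrite mulN1r.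
Qed.


Lemma cintegrable_mul_conj f g : L2 m f -> L2 m g ->
  cintegrable m (fun p => f p * conjc (g p)).
Proof.
move=> [[fRe fIm] f2] [[gRe gIm] g2].
have fg2 : m.-integrable setT (EFin \o (fun p => sqrnormc (f p) + sqrnormc (g p))).
  apply: (eq_integrable measurableT _ _ _ (integrableD measurableT f2 g2)).
  by move=> p _; rewrite /= EFinD.
have bound_by_fg2 (s : T -> R) : measurable_fun setT s ->
    (forall p, `|s p| <= sqrnormc (f p) + sqrnormc (g p)) ->
    m.-integrable setT (EFin \o s).
  move=> ms s_le; apply: (le_integrable measurableT _ _ fg2).
    exact/measurable_EFinP.
  move=> p _; rewrite lee_fin [X in _ <= X]ger0_norm; first exact: s_le.
  by rewrite addr_ge0 ?sqrnormc_ge0.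
split; apply: bound_by_fg2.
- under eq_fun do rewrite Re_mul_conj.
  exact: measurable_funD (measurable_funM _ _) (measurable_funM _ _).
- by move=> p; have [] := mul_conj_parts_le (f p) (g p).
- under eq_fun do rewrite Im_mul_conj.
  exact: measurable_funB (measurable_funM _ _) (measurable_funM _ _).
- by move=> p; have [] := mul_conj_parts_le (f p) (g p).
Qed.

Lemma L2_innerDl f g h : L2 m f -> L2 m g -> L2 m h ->
  L2_inner m (f \+ g) h = L2_inner m f h + L2_inner m g h.
Proof.
move=> Lf Lg Lh.
rewrite /L2_inner -(cintegralD (cintegrable_mul_conj Lf Lh) (cintegrable_mul_conj Lg Lh)).
by congr cintegral; apply: funext => p /=; rewrite mulrDl.
Qed.

Lemma L2_innerZl c f h : L2 m f -> L2 m h ->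
  L2_inner m (fun p => c * f p) h = c * L2_inner m f h.
Proof.
move=> Lf Lh; rewrite /L2_inner -(cintegralZ c (cintegrable_mul_conj Lf Lh)).
by congr cintegral; apply: funext => p; rewrite mulrA.
Qed.

Lemma L2_inner_conj f g : L2 m f -> L2 m g -> L2_inner m g f = conjc (L2_inner m f g).
Proof.
move=> Lf Lg; rewrite /L2_inner -(cintegral_conj (cintegrable_mul_conj Lf Lg)).
congr cintegral; apply: funext => p.
by case: (f p) (g p) => [a b] [c d] /=; congr (_ +i* _); ring.
Qed.

Lemma L2_inner_ge0 f : 0 <= complex.Re (L2_inner m f f).
Proof.
apply: Rintegral_ge0 => p _; rewrite Re_mul_conj -!expr2.
exact: sqrnormc_ge0.
Qed.

End ComplexIntegral.

Lemma kernel_translate (R : realType) (d' : measure_display) (G : topologicalZmodType)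
    (Y : measurableType d') (K : G -> Y -> Borel G * Y -> R[i]) :
  (forall (x u : G) (y v : Y), K x y (u, v) = K 0 y (u - x, v)) ->
  forall u v, K u v = rho u (K 0 v).
Proof. by move=> K_transl u v; apply: funext => -[a b]; exact: K_transl. Qed.

Section ReproducingKernelSpace.
Variables (R : realType) (d' : measure_display) (G : topologicalZmodType).
Variables (Y : measurableType d') (m : {measure set (Borel G * Y) -> \bar R}).
Variables (H : set (Borel G * Y -> R[i])) (K : G -> Y -> Borel G * Y -> R[i]).
Hypotheses (H_hilbert : L2_hilbert_subspace m H) (H_rk : reproducing_kernel m H K).

Let H_L2 : H `<=` L2 m. Proof. by case: H_hilbert. Qed.
Let H0 : H 0. Proof. by case: H_hilbert. Qed.
Let H_add f g : H f -> H g -> H (f + g).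
Proof. by case: H_hilbert => _ _ Hadd _ _; exact: Hadd. Qed.
Let H_scale c f : H f -> H (c *: f).
Proof. by case: H_hilbert => _ _ _ Hscale _; exact: Hscale. Qed.

Let ipDl f g h : H f -> H g -> H h ->
  L2_inner m (f + g) h = L2_inner m f h + L2_inner m g h.
Proof. by move=> /H_L2 Lf /H_L2 Lg /H_L2 Lh; exact: L2_innerDl. Qed.
Let ipZl c f h : H f -> H h -> L2_inner m (c *: f) h = c * L2_inner m f h.
Proof. by move=> /H_L2 Lf /H_L2 Lh; exact: L2_innerZl. Qed.
Let ip_conj f g : H f -> H g -> L2_inner m g f = conjc (L2_inner m f g).
Proof. by move=> /H_L2 Lf /H_L2 Lg; exact: L2_inner_conj. Qed.
Let ip_ge0 f : H f -> 0 <= complex.Re (L2_inner m f f).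
Proof. by move=> _; exact: L2_inner_ge0. Qed.

Lemma point_evaluation_representation S : bounded_operator m H S ->
  forall (x : G) (y : Y), exists2 g, H g & forall f, H f -> S f (x, y) = L2_inner m f g.
Proof.
move=> [SH SD SZ [M SM]] x y; have [HK K_rep] := H_rk x y.
apply: (riesz_representation H_add H_scale ipDl ipZl ip_conj ip_ge0 H0
  (M := M * L2_norm2 m (K x y))).
- by move=> f g Hf Hg; rewrite SD.
- by move=> c f Hf; rewrite SZ.
- move=> f Hf; have HSf := SH f Hf; rewrite K_rep //.
  apply: le_trans (cauchy_schwarz H_add H_scale ipDl ipZl ip_conj ip_ge0 HSf HK) _.
  by rewrite mulrAC ler_wpM2r ?ip_ge0 ?SM.
- by case: H_hilbert => _ _ _ _ Hcomplete; exact: Hcomplete.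
Qed.

Lemma kernel_conj_representer S g (x : G) (y : Y) : H g ->
  (forall f, H f -> S f (x, y) = L2_inner m f g) ->
  forall u v, S (K u v) (x, y) = conjc (g (u, v)).
Proof.
move=> Hg g_rep u v; have [HK K_rep] := H_rk u v.
by rewrite g_rep // K_rep // (ip_conj HK Hg) conjcK.
Qed.

End ReproducingKernelSpace.

Theorem proposition4p1 (R : realType) (d' : measure_display)
  (G : topologicalZmodType) (Y : measurableType d')
  (nu : {measure set Borel G -> \bar R}) (lam : {measure set Y -> \bar R})
  (m : {measure set (Borel G * Y) -> \bar R})
  (H : set (Borel G * Y -> R[i])) (K : G -> Y -> Borel G * Y -> R[i])
  (T : (Borel G * Y -> R[i]) -> (Borel G * Y -> R[i])) :
  LCA_group G ->
  haar_measure nu ->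
  is_product_measure nu lam m ->
  L2_hilbert_subspace m H ->
  reproducing_kernel m H K ->
  (forall (x u : G) (y v : Y), K x y (u, v) = K 0 y (u - x, v)) ->
  (forall (a : G) f, H f -> H (rho a f)) ->
  commutant m H T ->
  let KT := fun (x : G) (y : Y) (u : G) (v : Y) => T (K u v) (x, y) in
  [/\ (forall f, H f -> forall (x : G) (y : Y),
         cintegrable m (fun p => KT x y p.1 p.2 * f p) /\
         T f (x, y) = cintegral m (fun p => KT x y p.1 p.2 * f p)),
      (forall (x u : G) (y v : Y), KT x y u v = KT (x - u) y 0 v),
      (forall v : Y, H (fun p => KT p.1 p.2 0 v)) &
      (forall y : Y, H (fun p => conjc (KT 0 y p.1 p.2)))].
Proof.
move=> _ _ _ H_hilbert H_rk K_transl _ [T_bounded T_comm] KT.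
have H_L2 : H `<=` L2 m by case: H_hilbert.
have T_rep := point_evaluation_representation H_hilbert H_rk T_bounded.
have KT_conj x y g : H g -> (forall f, H f -> T f (x, y) = L2_inner m f g) ->
    forall p, KT x y p.1 p.2 = conjc (g p).
  by move=> Hg g_rep [u v]; exact: (kernel_conj_representer H_hilbert H_rk Hg g_rep).
split.
- move=> f Hf x y; have [g Hg g_rep] := T_rep x y.
  have -> : (fun p => KT x y p.1 p.2 * f p) = fun p => f p * conjc (g p).
    by apply: funext => p; rewrite mulrC (KT_conj x y g).
  by split; [exact: cintegrable_mul_conj (H_L2 _ Hf) (H_L2 _ Hg) | exact: g_rep].
- move=> x u y v; rewrite /KT (kernel_translate K_transl) T_comm //.
  exact: (H_rk 0 v).1.
- move=> v; case: T_bounded => T_H _ _ _.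
  by have := T_H _ (H_rk 0 v).1; congr H; apply: funext => -[].
- move=> y; have [g Hg g_rep] := T_rep 0 y.
  have -> // : (fun p => conjc (KT 0 y p.1 p.2)) = g.
  by apply: funext => p; rewrite (KT_conj 0 y g) // conjcK.
Qed.
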